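(* Let $\mu\in (0,\frac{1}{10})$. Then there exists a constant $\alpha>0$ such that for every sufficiently large integer $n$ the following holds. If $F$ is a forest without isolated vertices such that $v(F)\geq (1-\mu)n$ and $\Delta(F)\leq \alpha\sqrt{n}$, then $F$ has a leaf matching of size at least $\mu\sqrt{n}$ or a bare path of length at least $\mu\sqrt{n}$.
   Context: A leaf of $F$ is a vertex of degree 1. A leaf matching in $F$ is a matching in $F$ each of whose edges contains a leaf of $F$. A bare path in $F$ is a path in $F$ all of whose inner vertices have degree 2 in $F$; its length is its number of edges. *)

From HB Require Import structures.
From mathcomp Require Import all_boot all_order all_algebra.
From mathcomp Require Export reals.
Set Implicit Arguments. Unset Strict Implicit. Unset Printing Implicit Defensive.

(* A finite simple graph is given by a symmetric irreflexive relation
   e : rel T on a finType T; its vertex set is T, so v(F) = #|T|. *)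

Definition deg (T : finType) (e : rel T) (v : T) : nat := #|[set u | e v u]|.

Definition forest (T : finType) (e : rel T) : Prop :=
  forall (x : T) (p : seq T),
    path e x p -> uniq (x :: p) -> (2 <= size p)%N -> ~~ e (last x p) x.

Definition leaf (T : finType) (e : rel T) (v : T) : bool := deg e v == 1%N.

Definition matching (T : finType) (e : rel T) (M : {set T * T}) : Prop :=
  (forall pq, pq \in M -> e pq.1 pq.2) /\
  (forall pq rs, pq \in M -> rs \in M -> pq != rs ->
     [disjoint [set pq.1; pq.2] & [set rs.1; rs.2]]).

Definition leaf_matching (T : finType) (e : rel T) (M : {set T * T}) : Prop :=
  matching e M /\ (forall pq, pq \in M -> leaf e pq.1 || leaf e pq.2).

(* The path with vertex sequence x :: p (length = size p edges), all of
   whose inner vertices have degree 2. *)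
Definition bare_path (T : finType) (e : rel T) (x : T) (p : seq T) : Prop :=
  [/\ path e x p, uniq (x :: p) & all (fun v => deg e v == 2%N) (behead (belast x p))].

From HB Require Import structures.
From mathcomp Require Import all_boot all_order all_algebra.
From mathcomp Require Import reals.
From mathcomp Require Import zify lra boolp.
Import Order.TTheory GRing.Theory Num.Theory.

(* Let m be the size of the leaf matching that pairs every vertex having a
   leaf neighbour with one such leaf.  There are at most m (Delta + 1) leaves.
   On the non-leaves, the vertices with a leaf neighbour or of degree at least
   3 (the hubs) number O(m): the non-leaves induce a forest, which has fewer
   edges than vertices, and a non-leaf with at most one non-leaf neighbour has
   a leaf neighbour.  Every other non-leaf has degree 2 and lies on a bare path
   starting at a hub, so there are O(m K) of them if all bare paths are
   shorter than K.  Hence v(F) <= m (Delta + 4 + 8 K), which is incompatible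
   with v(F) >= (1 - mu) n when Delta <= sqrt n, K ~ mu sqrt n and
   m < mu sqrt n. *)

Set Implicit Arguments. Unset Strict Implicit.

Lemma leq_card_bigcup (I U : finType) (P : pred I) (F : I -> {set U}) :
  (#|\bigcup_(i | P i) F i| <= \sum_(i | P i) #|F i|)%N.
Proof.
elim/big_rec2: _ => [|i B n _ IH]; first by rewrite cards0.
exact: leq_trans (leq_card_setU _ _) (leq_add _ IH).
Qed.

Lemma leq_card_functional_cover (U V : finType) (A : {set U}) (B : {set V})
    (r : V -> U -> Prop) :
  (forall u, u \in A -> exists2 v, v \in B & r v u) ->
  (forall v u1 u2, r v u1 -> r v u2 -> u1 = u2) ->
  (#|A| <= #|B|)%N.
Proof.
move=> cover functional; case: (pickP (mem A)) => [u0 _ | A0]; last first.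
  by rewrite eq_card0.
pose f v := odflt u0 [pick u | `[< r v u >]].
apply: leq_trans (leq_imset_card f B); apply/subset_leq_card/subsetP => u uA.
have [v vB rvu] := cover u uA; apply/imsetP; exists v => //.
rewrite /f; case: pickP => [u' /asboolP rvu' | none]; first exact: functional rvu rvu'.
by have := none u; rewrite asboolT.
Qed.

Section Forest.
Variables (T : finType) (e : rel T).
Hypotheses (e_sym : symmetric e) (e_irr : irreflexive e).

Definition deg_in (W : {set T}) (v : T) : nat := #|[set u in W | e v u]|.

Lemma deg_in_le_setD1 (W : {set T}) w : (deg_in W w <= #|W :\ w|)%N.
Proof.
apply/subset_leq_card/subsetP => u; rewrite !inE => /andP[-> ewu].
by rewrite andbT; apply: contraTneq ewu => ->; rewrite e_irr.
Qed.

Lemma sum_deg_in_setD1 (W : {set T}) w : w \in W ->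
  \sum_(v in W) deg_in W v =
  (2 * deg_in W w + \sum_(v in W :\ w) deg_in (W :\ w) v)%N.
Proof.
move=> wW; rewrite (big_setD1 w wW) /=.
have -> : \sum_(v in W :\ w) deg_in W v =
          (\sum_(v in W :\ w) (e v w : nat) + \sum_(v in W :\ w) deg_in (W :\ w) v)%N.
  rewrite -big_split /=; apply: eq_bigr => v; rewrite !inE => /andP[vw vW].
  rewrite /deg_in (cardsD1 w) !inE wW /=; congr (_ + _)%N.
  by apply: eq_card => u; rewrite !inE andbA.
suff -> : \sum_(v in W :\ w) (e v w : nat) = deg_in W w by lia.
rewrite -big_mkcondr sum1dep_card; apply: eq_card => u; rewrite !inE e_sym.
by case: eqP => [->|]; rewrite ?e_irr ?andbF.
Qed.

Lemma deg2_nbr_eq a x c d : deg e a = 2%N -> e a x -> e a c -> e a d ->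
  x != c -> x != d -> c = d.
Proof.
move=> /eqP/cards2P [y1 [y2 [_ nbr_a]]].
have nbr z : e a z -> (z == y1) || (z == y2).
  move=> ez; have : z \in [set u | e a u] by rewrite inE.
  by rewrite nbr_a !inE.
move=> /nbr x12 /nbr c12 /nbr d12.
by case/orP: x12 => /eqP->; case/orP: c12 => /eqP->; case/orP: d12 => /eqP->;
  rewrite ?eqxx.
Qed.

(* Inside a bare path each vertex has exactly one neighbour besides its
   predecessor, so the path is forced by its first edge and its length. *)
Lemma bare_path_unique x p q : bare_path e x p -> path e x q -> uniq (x :: q) ->
  size p = size q -> head x p = head x q -> p = q.
Proof.
case; elim: p x q => [|a p IH] x [|b q] //= /andP[ea pa] /andP[xap uap] inner.
move=> /andP[eb pb] /andP[xbq ubq] [sz] ab; subst b; congr (_ :: _).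
case: p IH pa xap uap inner sz => [|c p] IH pa xap uap inner sz.
  by case: q pb xbq ubq sz.
case: q pb xbq ubq sz => [|d q] // pb xbq ubq [sz].
move: inner pa pb => /= /andP[/eqP deg_a inner] /andP[ec pc] /andP[ed pd].
have cd : c = d.
  apply: (deg2_nbr_eq deg_a (x := x)) => //; first by rewrite e_sym.
  - by apply: contra xap => /eqP->; rewrite !inE eqxx orbT.
  - by apply: contra xbq => /eqP->; rewrite !inE eqxx orbT.
subst d; apply: (IH a) => //=; rewrite ?ec ?ed ?pc ?pd ?sz //.
Qed.

Hypothesis e_forest : forest e.

(* [last v (belast v q)] is the penultimate vertex of [v :: q]. *)
Lemma forest_path_last_nbr v q y : path e v q -> uniq (v :: q) ->
  y \in v :: q -> e (last v q) y -> y = last v (belast v q).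
Proof.
move=> pq uq; rewrite lastI mem_rcons inE => /orP[/eqP-> | yb]; first by rewrite e_irr.
have [s1 [s2 Eb]] : exists s1 s2, belast v q = s1 ++ y :: s2.
  by case/splitPr: yb => s1 s2; exists s1, s2.
set l := last v q; have Evq : v :: q = s1 ++ y :: rcons s2 l.
  by rewrite lastI Eb rcons_cat.
have pys : path e y (rcons s2 l).
  case: s1 {Eb} Evq => [|a s1] /= [Ev Eq]; first by rewrite -Ev -Eq.
  by move: pq; rewrite Eq cat_path => /andP[_ /= /andP[_ ->]].
have uys : uniq (y :: rcons s2 l) by move: uq; rewrite Evq cat_uniq => /and3P[].
rewrite Eb last_cat /=; case: s2 pys uys {Evq Eb} => [//|z s2] pys uys ely.
by have := e_forest pys uys; rewrite size_rcons last_rcons ely => /(_ isT).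
Qed.

Lemma maximal_path (W : {set T}) v : v \in W ->
  exists q, [/\ path e v q, uniq (v :: q), {subset v :: q <= W} &
             forall y, y \in W -> e (last v q) y -> y \in v :: q].
Proof.
move=> vW; suff extend : forall q, path e v q -> uniq (v :: q) ->
    {subset v :: q <= W} -> exists q', [/\ path e v q', uniq (v :: q'),
    {subset v :: q' <= W} & forall y, y \in W -> e (last v q') y -> y \in v :: q'].
  by apply: (extend [::]) => // u; rewrite inE => /eqP->.
move=> q; have [k] := ubnP (#|T| - size q); elim: k q => // k IH q lt_k pq uq qW.
case: (pickP [pred y | [&& y \in W, e (last v q) y & y \notin v :: q]]) =>
    [y /and3P[yW ey yq] | maximal]; last first.
  by exists q; split=> // y yW ey; apply: contraFT (maximal y) => yq /=; rewrite yW ey.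
apply: (IH (rcons q y)).
- have : (size (y :: v :: q) <= #|T|)%N.
    by rewrite -(card_uniqP _) ?max_card //= yq.
  by move: lt_k; rewrite size_rcons /=; set N := #|T|; lia.
- by rewrite rcons_path pq ey.
- by rewrite -rcons_cons rcons_uniq yq.
- by move=> u; rewrite -rcons_cons mem_rcons inE => /orP[/eqP-> | /qW].
Qed.

Lemma exists_deg_in_le1 (W : {set T}) : W != set0 ->
  exists2 w, w \in W & (deg_in W w <= 1)%N.
Proof.
case/set0Pn => v vW; have [q [pq uq qW maxq]] := maximal_path vW.
exists (last v q); first exact/qW/mem_last.
rewrite leqNgt; apply/negP => /card_gt1P[y1 [y2 []]].
rewrite !inE => /andP[y1W e1] /andP[y2W e2].
rewrite (forest_path_last_nbr pq uq (maxq _ y1W e1) e1).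
by rewrite (forest_path_last_nbr pq uq (maxq _ y2W e2) e2) eqxx.
Qed.

Lemma sum_deg_in_le (W : {set T}) :
  (\sum_(v in W) deg_in W v <= 2 * #|W| - 2)%N.
Proof.
have [n] := ubnP #|W|; elim: n W => // n IH W ltWn.
have [->|W0] := eqVneq W set0; first by rewrite big_set0.
have [w wW dw] := exists_deg_in_le1 W0.
have cW : #|W| = #|W :\ w|.+1 by rewrite (cardsD1 w W) wW.
have := IH (W :\ w); rewrite -ltnS -cW => /(_ ltWn) IHw.
rewrite (sum_deg_in_setD1 wW) cW; have := deg_in_le_setD1 W w; lia.
Qed.

End Forest.

Section LeafMatching.
Variables (T : finType) (e : rel T).
Hypotheses (e_sym : symmetric e) (e_irr : irreflexive e).

Definition has_leaf_nbr (v : T) : bool := [exists u, e v u && leaf e u].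

Definition leaf_nbr (v : T) : T := odflt v [pick u | e v u && leaf e u].

(* Both ends of an isolated edge are leaves; [enum_rank] elects one of them. *)
Definition centres : {set T} :=
  [set v | has_leaf_nbr v &&
           (~~ leaf e v || (enum_rank v < enum_rank (leaf_nbr v))%N)].

Definition centre_matching : {set T * T} := [set (v, leaf_nbr v) | v in centres].

Lemma leaf_nbrP v : has_leaf_nbr v -> e v (leaf_nbr v) && leaf e (leaf_nbr v).
Proof.
by rewrite /leaf_nbr; case: pickP => [u //|none /existsP[u]]; rewrite none.
Qed.

Lemma leaf_nbr_unique l a b : leaf e l -> e l a -> e l b -> a = b.
Proof.
move=> /cards1P[y nbr_l] ela elb.
have : a \in [set u | e l u] by rewrite inE.
have : b \in [set u | e l u] by rewrite inE.
by rewrite nbr_l !inE => /eqP-> /eqP->.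
Qed.

Lemma leaf_has_nbr l : leaf e l -> exists u, e l u.
Proof.
by move=> /cards1P[y nbr_l]; exists y; have := set11 y; rewrite -nbr_l inE.
Qed.

Lemma leaf_nbr_of_leaf l u : leaf e l -> has_leaf_nbr l -> e l u -> leaf_nbr l = u.
Proof. by move=> ll /leaf_nbrP/andP[el _]; apply: leaf_nbr_unique. Qed.

Lemma centre_neq_leaf_nbr v w : v \in centres -> w \in centres -> v != w ->
  v != leaf_nbr w.
Proof.
rewrite !inE => /andP[hv rv] /andP[hw rw] vw; apply/eqP => Ev.
have [ew lw] := andP (leaf_nbrP hw); rewrite -Ev in ew lw.
have Ew : leaf_nbr v = w by apply: leaf_nbr_of_leaf; rewrite // e_sym.
have lw' : leaf e w by rewrite -Ew; case/andP: (leaf_nbrP hv).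
move: rv rw; rewrite lw lw' Ew -Ev /= => vw_rank wv_rank.
by have := ltn_trans vw_rank wv_rank; rewrite ltnn.
Qed.

Lemma centre_matching_leaf_matching : leaf_matching e centre_matching.
Proof.
split; last first.
  move=> _ /imsetP[v vC ->]; move: vC; rewrite inE => /andP[/leaf_nbrP/andP[_ ->] _].
  by rewrite orbT.
split=> [_ /imsetP[v vC ->] | _ _ /imsetP[v vC ->] /imsetP[w wC ->] /= ne].
  by move: vC; rewrite inE => /andP[/leaf_nbrP/andP[-> _] _].
have vw : v != w by apply: contraNneq ne => ->.
have vlw := centre_neq_leaf_nbr vC wC vw.
have wlv : w != leaf_nbr v by apply: centre_neq_leaf_nbr; rewrite // eq_sym.
have lvw : leaf_nbr v != leaf_nbr w.
  move: vC wC; rewrite !inE => /andP[/leaf_nbrP/andP[ev lv] _].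
  move=> /andP[/leaf_nbrP/andP[ew _] _].
  apply: contraNneq vw => E; apply/eqP/(leaf_nbr_unique lv); first by rewrite e_sym.
  by rewrite E e_sym.
rewrite -setI_eq0; apply/eqP/setP => z; rewrite !inE.
apply/negP => /andP[] /orP[]/eqP-> /orP[]/eqP E;
  by move: vw vlw wlv lvw; rewrite E eqxx.
Qed.

Lemma card_centre_matching : #|centre_matching| = #|centres|.
Proof. by apply: card_in_imset => v w _ _ []. Qed.

Lemma card_leaves_le :
  (#|[set v | leaf e v]| <= \sum_(a in centres) (deg e a).+1)%N.
Proof.
apply: leq_trans (_ : #|\bigcup_(a in centres) (a |: [set u | e a u])| <= _)%N.
  apply/subset_leq_card/subsetP => l; rewrite inE => ll.
  suff [a aC la] : exists2 a, a \in centres & l \in a |: [set u | e a u].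
    by apply/bigcupP; exists a.
  have [u elu] := leaf_has_nbr ll; have eul : e u l by rewrite e_sym.
  have hu : has_leaf_nbr u by apply/existsP; exists l; rewrite eul ll.
  have [lu | nlu] := boolP (leaf e u); last by exists u; rewrite !inE ?hu ?nlu ?eul ?orbT.
  have hl : has_leaf_nbr l by apply/existsP; exists u; rewrite elu lu.
  case: (ltngtP (enum_rank l) (enum_rank u)) => r.
  - by exists l; rewrite !inE ?eqxx // hl (leaf_nbr_of_leaf ll hl elu) r orbT.
  - by exists u; rewrite !inE ?eul ?orbT // hu (leaf_nbr_of_leaf lu hu eul) r orbT.
  - by move: elu; rewrite (enum_rank_inj (val_inj r)) e_irr.
apply: leq_trans (leq_card_bigcup _ _) _; apply: leq_sum => a _.
by rewrite cardsU1; case: (a \notin _).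
Qed.

End LeafMatching.

Section ForestStructure.
Variables (T : finType) (e : rel T).
Hypotheses (e_sym : symmetric e) (e_irr : irreflexive e) (e_forest : forest e).
Hypothesis no_isolated : forall v, (0 < deg e v)%N.

Definition nonleaves : {set T} := [set v | ~~ leaf e v].

Definition supports : {set T} := [set v in nonleaves | has_leaf_nbr e v].

Definition hubs : {set T} :=
  [set v in nonleaves | has_leaf_nbr e v || (2 < deg e v)%N].

Local Notation dN := (deg_in e nonleaves).

Lemma nonleaf_deg_ge2 v : v \in nonleaves -> (2 <= deg e v)%N.
Proof. by rewrite inE /leaf; have := no_isolated v; case: (deg e v) => [|[]]. Qed.

Lemma deg_in_nonleaves v : ~~ has_leaf_nbr e v -> dN v = deg e v.
Proof.
move=> /existsPn no_leaf; apply: eq_card => u; rewrite !inE.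
by have := no_leaf u; case: (e v u); rewrite /= ?andbT ?andbF.
Qed.

Lemma deg_in_le1_support v : v \in nonleaves -> (dN v <= 1)%N -> v \in supports.
Proof.
move=> vN dv; rewrite inE vN /=; apply: contraTT dv => no_leaf.
by rewrite deg_in_nonleaves // -ltnNge nonleaf_deg_ge2.
Qed.

Lemma sum_excess_le : (\sum_(v in nonleaves) (dN v - 2) <= 2 * #|supports|)%N.
Proof.
set low := [set v in nonleaves | (dN v <= 1)%N].
have low_supports : (#|low| <= #|supports|)%N.
  apply/subset_leq_card/subsetP => v; rewrite inE => /andP[].
  exact: deg_in_le1_support.
have pointwise : (\sum_(v in nonleaves) ((dN v - 2) + 2) <=
                  \sum_(v in nonleaves) (dN v + 2 * (dN v <= 1)))%N.
  by apply: leq_sum => v _; lia.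
move: pointwise; rewrite big_split sum_nat_const [X in (_ <= X)%N]big_split /=.
rewrite -big_distrr -big_mkcondr /= sum1dep_card -/low.
have := sum_deg_in_le e_sym e_irr e_forest nonleaves; lia.
Qed.

Lemma card_hubs_le : (#|hubs| <= 3 * #|supports|)%N.
Proof.
set high := [set v in nonleaves | (2 < dN v)%N].
have card_high : (#|high| <= 2 * #|supports|)%N.
  apply: leq_trans sum_excess_le; rewrite -sum1dep_card big_mkcondr /=.
  by apply: leq_sum => v _; case: ifP => // ?; lia.
have hubs_sub : hubs \subset supports :|: high.
  apply/subsetP => v; rewrite !inE => /andP[vN /orP[-> | dv]]; first by rewrite vN.
  rewrite vN /=; have [//|no_leaf] := boolP (has_leaf_nbr e v).
  by rewrite deg_in_nonleaves.
apply: leq_trans (subset_leq_card hubs_sub) _.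
by apply: leq_trans (leq_card_setU _ _) _; lia.
Qed.

Lemma hubs_nonleaves : hubs \subset nonleaves.
Proof. by apply/subsetP => v; rewrite inE => /andP[]. Qed.

Lemma sum_deg_in_hubs_le : (\sum_(x in hubs) dN x <= 8 * #|supports|)%N.
Proof.
have excess_hubs : (\sum_(x in hubs) (dN x - 2) <= \sum_(v in nonleaves) (dN v - 2))%N.
  by rewrite [X in (_ <= X)%N](big_setID hubs) /= (setIidPr hubs_nonleaves) leq_addr.
apply: leq_trans (_ : \sum_(x in hubs) ((dN x - 2) + 2) <= _)%N.
  by apply: leq_sum => v _; lia.
rewrite big_split /= sum_nat_const.
have := sum_excess_le; have := card_hubs_le; lia.
Qed.

Lemma card_supports_le : (#|supports| <= #|centres e|)%N.
Proof.
apply/subset_leq_card/subsetP => v; rewrite !inE => /andP[nl ->].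
by rewrite nl.
Qed.

Definition thread_vertices : {set T} := nonleaves :\: hubs.

Lemma thread_vertexP v : v \in thread_vertices -> deg e v = 2%N /\ ~~ has_leaf_nbr e v.
Proof.
rewrite !inE => /andP[+ nl]; rewrite nl /= negb_or => /andP[no_leaf dv].
by split=> //; apply/eqP; rewrite eqn_leq leqNgt dv nonleaf_deg_ge2 ?inE.
Qed.

Lemma thread_nbr_nonleaf v u : v \in thread_vertices -> e v u -> u \in nonleaves.
Proof.
move=> /thread_vertexP[_ /existsPn no_leaf] evu; rewrite inE.
by have := no_leaf u; rewrite evu.
Qed.

(* Extend v to a maximal path inside the thread vertices and read it
   backwards from a hub adjacent to its far end. *)
Lemma hub_path_to v : v \in thread_vertices ->
  exists x p, [/\ x \in hubs, bare_path e x p, head x p \in nonleaves,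
                  e x (head x p) & last x p = v].
Proof.
move=> vW; have [q [pq uq qW maxq]] := maximal_path e vW.
set l := last v q; have lW : l \in thread_vertices by apply/qW/mem_last.
have [/eqP/cards2P[y1 [y2 [y12 nbr_l]]] _] := thread_vertexP lW.
have nbr y : y \in [set y1; y2] -> e l y by rewrite -nbr_l inE.
have [y [yH ely]] : exists y, y \in hubs /\ e l y.
  have e1 := nbr y1 (set21 _ _); have e2 := nbr y2 (set22 _ _).
  have [y1H|y1W] := boolP (y1 \in hubs); first by exists y1.
  have [y2H|y2W] := boolP (y2 \in hubs); first by exists y2.
  have onpath y : y \notin hubs -> e l y -> y = last v (belast v q).
    move=> yW ey; apply: (forest_path_last_nbr e_irr e_forest pq uq _ ey).
    by apply: (maxq _ _ ey); rewrite inE yW (thread_nbr_nonleaf lW ey).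
  by move: y12; rewrite (onpath _ y1W e1) (onpath _ y2W e2) eqxx.
have Erev : rev (v :: q) = l :: rev (belast v q) by rewrite lastI rev_rcons.
have onW z : z \in rev (v :: q) -> z \in thread_vertices by rewrite mem_rev => /qW.
exists y, (rev (v :: q)); split=> //.
- split.
  + rewrite Erev /= e_sym ely /= rev_path.
    by rewrite (@eq_path _ _ e _ v q) // => a b; rewrite e_sym.
  + rewrite /= rev_uniq uq andbT; apply: contraL yH => /onW.
    by rewrite inE => /andP[].
  + rewrite Erev /=; apply/allP => z /mem_belast; rewrite -Erev => /onW zW.
    by have [-> _] := thread_vertexP zW.
- by rewrite Erev; move: lW; rewrite inE => /andP[].
- by rewrite Erev e_sym.
- by rewrite rev_cons last_rcons.
Qed.

Lemma card_thread_vertices_le K :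
    (forall x p, bare_path e x p -> (size p < K)%N) ->
  (#|thread_vertices| <= (\sum_(x in hubs) dN x) * K)%N.
Proof.
move=> short.
set E := [set xy : T * T | [&& xy.1 \in hubs, xy.2 \in nonleaves & e xy.1 xy.2]].
have card_E : (#|E| <= \sum_(x in hubs) dN x)%N.
  pose star x := [set (x, u) | u in [set u in nonleaves | e x u]].
  apply: leq_trans (_ : #|\bigcup_(x in hubs) star x| <= _)%N.
    apply/subset_leq_card/subsetP => -[x u]; rewrite inE /= => /and3P[xH uN exu].
    by apply/bigcupP; exists x => //; apply: imset_f; rewrite inE uN.
  apply: leq_trans (leq_card_bigcup _ _) _; apply: leq_sum => x _.
  exact: leq_imset_card.
apply: leq_trans (_ : #|setX E [set: 'I_K]| <= _)%N; last first.
  by rewrite cardsX cardsT card_ord leq_mul.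
pose ends (t : (T * T) * 'I_K) v := exists p, [/\ bare_path e t.1.1 p,
  head t.1.1 p = t.1.2, size p = val t.2 & last t.1.1 p = v].
apply: (@leq_card_functional_cover _ _ _ _ ends).
  move=> v vW; have [x [p [xH bp hN exh lv]]] := hub_path_to vW.
  exists ((x, head x p), Ordinal (short x p bp)); last by exists p.
  by rewrite in_setX in_setT andbT inE /= xH hN exh.
move=> [[x y] k] u1 u2 [p1 [bp1 h1 s1 <-]] [p2 [[pp2 up2 _] h2 s2 <-]].
by rewrite (bare_path_unique e_sym bp1 pp2 up2) //= ?s1 ?s2 ?h1 ?h2.
Qed.

Lemma card_forest_le D K : (forall v, (deg e v <= D)%N) ->
    (forall x p, bare_path e x p -> (size p < K)%N) ->
  (#|T| <= #|centres e| * (D + 4 + 8 * K))%N.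
Proof.
move=> deg_le short.
have card_T : #|T| = (#|[set v | leaf e v]| + #|hubs| + #|thread_vertices|)%N.
  rewrite -(cardsC [set v | leaf e v]) -addnA; congr (_ + _)%N.
  have -> : ~: [set v | leaf e v] = nonleaves by apply/setP => v; rewrite !inE.
  by rewrite -(cardsID hubs nonleaves) (setIidPr hubs_nonleaves).
have card_leaves : (#|[set v | leaf e v]| <= #|centres e| * D.+1)%N.
  apply: leq_trans (card_leaves_le e_sym e_irr) _; rewrite -sum_nat_const.
  by apply: leq_sum => a _; rewrite ltnS.
have := card_thread_vertices_le short; have := sum_deg_in_hubs_le.
have := card_hubs_le; have := card_supports_le; nia.
Qed.

End ForestStructure.

Local Open Scope ring_scope.

Lemma budget_lt_sq (R : realFieldType) (mu t m : R) :
  0 < mu -> mu * 10 < 1 -> 2 <= t -> m < mu * t ->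
  m * (t + 12 + 8 * mu * t) < (1 - mu) * t ^+ 2.
Proof.
move=> mu_gt0 mu_small t_ge2 m_lt.
have c_gt0 : 0 < t + 12 + 8 * mu * t by nra.
have per_unit : mu * (t + 12 + 8 * mu * t) <= (1 - mu) * t by nra.
have gap : 0 < (mu * t - m) * (t + 12 + 8 * mu * t) by rewrite mulr_gt0 ?subr_gt0.
have : 0 <= t * ((1 - mu) * t - mu * (t + 12 + 8 * mu * t)).
  by rewrite mulr_ge0 ?subr_ge0 //; lra.
move: gap; rewrite expr2; lra.
Qed.

Unset Implicit Arguments.

Theorem corollaryA2 (R : realType) (mu : R) :
  0 < mu -> mu < 1 / 10%:R ->
  exists alpha : R, 0 < alpha /\
  exists N : nat, forall n : nat, (N <= n)%N ->
  forall (T : finType) (e : rel T),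
    symmetric e -> irreflexive e -> forest e ->
    (forall v : T, (0 < deg e v)%N) ->
    (1 - mu) * n%:R <= #|T|%:R ->
    (forall v : T, (deg e v)%:R <= alpha * Num.sqrt (n%:R)) ->
    (exists M : {set T * T},
        leaf_matching e M /\ mu * Num.sqrt (n%:R) <= #|M|%:R)
    \/
    (exists (x : T) (p : seq T),
        bare_path e x p /\ mu * Num.sqrt (n%:R) <= (size p)%:R).
Proof.
move=> mu_gt0 mu_lt; exists 1; split=> //; exists 4%N.
move=> n n_ge4 T e e_sym e_irr e_forest no_isolated card_T deg_le.
set t := Num.sqrt n%:R in deg_le *.
have t_ge0 : 0 <= t := sqrtr_ge0 _.
have t_sq : t ^+ 2 = n%:R by rewrite sqr_sqrtr ?ler0n.
have n_ge4R : 4 <= n%:R :> R by rewrite ler_nat.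
have t_ge2 : 2 <= t by nra.
have mu_small : mu * 10 < 1 by rewrite -ltr_pdivlMr // mul1r.
have [long | no_long] := pselect (exists x p, bare_path e x p /\ mu * t <= (size p)%:R).
  by right.
left; exists (centre_matching e); split; first exact: centre_matching_leaf_matching.
rewrite card_centre_matching leNgt; apply/negP => small.
have deg_trunc v : (deg e v <= Num.truncn t)%N.
  by rewrite truncn_ge_nat // -[t]mul1r.
have short x p : bare_path e x p -> (size p < (Num.truncn (mu * t)).+1)%N.
  move=> bp; rewrite ltnS truncn_ge_nat; last by rewrite mulr_ge0 // ltW.
  by apply/ltW; rewrite ltNge; apply/negP => long; apply: no_long; exists x, p.
have trunc_t : (Num.truncn t)%:R <= t by rewrite truncn_le.
have trunc_mt : (Num.truncn (mu * t))%:R <= mu * t by rewrite truncn_le mulr_ge0 // ltW.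
have bound : #|T|%:R <= #|centres e|%:R * (t + 12 + 8 * mu * t).
  apply: (@le_trans _ _ (#|centres e| *
            (Num.truncn t + 4 + 8 * (Num.truncn (mu * t)).+1))%:R).
    by rewrite ler_nat card_forest_le.
  rewrite natrM ler_wpM2l // natrD natrD natrM -natr1; lra.
have := budget_lt_sq mu_gt0 mu_small t_ge2 small.
by rewrite t_sq; lra.
Qed.
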